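(* Let $R \in \mathfrak{D}$ and $\mathfrak{D}' \subseteq \mathfrak{D}$, and suppose that one of the following holds: (i) $\mathfrak{D}' = \mathfrak{D}$; (ii) $R \in \mathfrak{T}_a$ and $\mathfrak{T}_a \subseteq \mathfrak{D}' \subseteq \mathfrak{D}$; (iii) $\mathfrak{D}' = \mathfrak{P}$ or $\mathfrak{D}' = \mathfrak{P}^*$, and $R \in \mathfrak{D}'$. Then for every $S \in \mathfrak{D}$ the following are equivalent: (a) $R \sqsubseteq_\Gamma S$ with respect to $\mathfrak{D}'$; (b) $\# \mathcal{S}(G,R) \leq \# \mathcal{S}(G,S)$ for all $G \in \mathfrak{D}'$. Moreover, (b) implies $\# \mathcal{H}(G,R) \leq \# \mathcal{H}(G,S)$ for all $G \in \mathfrak{D}'$.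
   Context: **Digraphs and homomorphisms.** - A digraph $G$ is a pair $(V(G),A(G))$, where $V(G)$ is a finite non-empty set and $A(G) \subseteq V(G)\times V(G)$. Arcs are written $vw$. - An arc $vv$ is a loop. An arc $vw$ with $v\neq w$ is proper. $G^*$ denotes $G$ with all loops removed. - A homomorphism $\xi: G\to H$ is a map $V(G)\to V(H)$ such that $\xi(v)\xi(w)\in A(H)$ for all $vw\in A(G)$. $\mathcal{H}(G,H)$ is the set of homomorphisms. - A homomorphism is strict if it maps every proper arc of $G$ to a proper arc of $H$. $\mathcal{S}(G,H)$ is the set of strict homomorphisms from $G$ to $H$. - A walk in $G$ is a sequence $v_0,\dots,v_I$ with $I\geq 1$ and $v_{i-1}v_i\in A(G)$ for all $i$. It is closed if $v_0=v_I$, and trivial if all $v_i$ are equal. **Classes of digraphs.** - $\mathfrak{D}$ is the class of all digraphs. - $\mathfrak{P}$ is the class of finite posets, i.e. reflexive, antisymmetric, transitive digraphs. - $\mathfrak{P}^* = \{P^* : P\in\mathfrak{P}\}$. - $\mathfrak{T}_a = \{G\in\mathfrak{D} : G^* \text{ contains no closed walk}\}$. Equivalently, every closed walk in $G$ is trivial. **Connectivity.** - Two vertices $u,w$ are adjacent if $uw\in A(G)$ or $wu\in A(G)$. - For $X\subseteq V(G)$ and $v,w\in X$, the vertices $v$ and $w$ are connected in $X$ if $v=w$, or if there are $z_0=v,z_1,\dots,z_I=w$ in $X$ with $z_{i-1},z_i$ adjacent for all $i$. - $\gamma_X(v)$ is the set of $w\in X$ connected to $v$ in $X$. - For any map $\xi$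 from $V(G)$ to a set, $\Gamma_\xi(v) := \gamma_{\xi^{-1}(\xi(v))}(v)$. **Schemes.** - For a class $\mathfrak{D}'\subseteq\mathfrak{D}$, let $\mathfrak{D}'_r$ be a fixed system of representatives of $\mathfrak{D}'$ up to isomorphism. - For $R,S\in\mathfrak{D}$, a Hom-scheme from $R$ to $S$ with respect to $\mathfrak{D}'$ is a family $\rho=(\rho_G)_{G\in\mathfrak{D}'_r}$ of maps $\rho_G:\mathcal{H}(G,R)\to\mathcal{H}(G,S)$. - It is strong if every $\rho_G$ is injective. - It is a $\Gamma$-scheme if $\Gamma_{\rho_G(\xi)}(v)=\Gamma_\xi(v)$ for all $G\in\mathfrak{D}'_r$, $\xi\in\mathcal{H}(G,R)$ and $v\in V(G)$. - $R\sqsubseteq_\Gamma S$ with respect to $\mathfrak{D}'$ means that a strong $\Gamma$-scheme from $R$ to $S$ with respect to $\mathfrak{D}'$ exists. *)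

From mathcomp Require Import all_boot.
Set Implicit Arguments. Unset Strict Implicit. Unset Printing Implicit Defensive.

Record digraph := Digraph { dV : finType; dA : rel dV; dV_nonempty : 0 < #|dV| }.
Arguments dA : clear implicits.
Arguments dV_nonempty : clear implicits.

Definition unloop (G : digraph) : digraph :=
  @Digraph (dV G) (fun v w => (v != w) && dA G v w) (dV_nonempty G).

Definition is_hom (G H : digraph) (f : {ffun dV G -> dV H}) : bool :=
  [forall v, forall w, dA G v w ==> dA H (f v) (f w)].

Definition is_strict (G H : digraph) (f : {ffun dV G -> dV H}) : bool :=
  is_hom f && [forall v, forall w, (dA G v w && (v != w)) ==> (f v != f w)].

Definition Hom (G H : digraph) := {f : {ffun dV G -> dV H} | is_hom f}.
Definition homset (G H : digraph) := [set f : {ffun dV G -> dV H} | is_hom f].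
Definition strictset (G H : digraph) := [set f : {ffun dV G -> dV H} | is_strict f].

Definition iso (G H : digraph) : Prop :=
  exists f : dV G -> dV H, bijective f /\ forall v w, dA G v w = dA H (f v) (f w).

Definition iso_closed (C : digraph -> Prop) : Prop :=
  forall G H, iso G H -> C G -> C H.

Definition is_poset (G : digraph) : Prop :=
  reflexive (dA G) /\ antisymmetric (dA G) /\ transitive (dA G).

Definition is_poset_star (G : digraph) : Prop :=
  exists2 P, is_poset P & iso G (unloop P).

(* a closed walk v0, v1, ..., vI (I >= 1) in G is given by v0 and s = [v1;...;vI] *)
Definition closed_walk (G : digraph) (v0 : dV G) (s : seq (dV G)) : bool :=
  (s != [::]) && path (dA G) v0 s && (last v0 s == v0).

Definition in_Ta (G : digraph) : Prop :=
  forall v0 s, ~~ @closed_walk (unloop G) v0 s.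

Definition adjacent (G : digraph) (u w : dV G) : bool := dA G u w || dA G w u.

Definition gamma (G : digraph) (X : {set dV G}) (v : dV G) : {set dV G} :=
  [set w in X | connect (fun x y => [&& x \in X, y \in X & adjacent x y]) v w].

Definition Gam (G : digraph) (T : finType) (xi : {ffun dV G -> T}) (v : dV G)
  : {set dV G} := gamma [set u | xi u == xi v] v.

(* strong Gamma-scheme from R to S w.r.t. the class C, indexed by all members
   of C (C being isomorphism closed) *)
Definition strong_Gamma_scheme (C : digraph -> Prop) (R S : digraph)
  (rho : forall G : digraph, C G -> Hom G R -> Hom G S) : Prop :=
  forall G (hG : C G),
    injective (rho G hG) /\
    forall (xi : Hom G R) (v : dV G), Gam (val (rho G hG xi)) v = Gam (val xi) v.

Definition Gamma_le (C : digraph -> Prop) (R S : digraph) : Prop :=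
  exists rho, @strong_Gamma_scheme C R S rho.

From mathcomp Require Import all_boot.
From Stdlib Require Import IndefiniteDescription.
Set Implicit Arguments. Unset Strict Implicit. Unset Printing Implicit Defensive.

(* Proof idea.  The "component type" of a map xi : G -> T is the function
   v |-> Gamma_xi(v); a Gamma-scheme is exactly a family of injections
   Hom(G,R) -> Hom(G,S) preserving component types.

   (a) => (b): a strict homomorphism is one whose components are singletons,
   so a type-preserving injection maps strict homomorphisms to strict ones.
   (b) => (a): it suffices to compare, for each G and each type k, the number
   of homomorphisms G -> R and G -> S of type k (fiberwise injection).  Fix
   xi0 : G -> R of type k and contract each component of xi0 to a point,
   giving a digraph Q and a homomorphism pi : G -> Q.  Homomorphisms G -> R of
   type k factor through pi as strict homomorphisms Q -> R, and strict
   homomorphisms Q -> S pull back along pi to homomorphisms of type k, so (b)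
   for Q gives the fiber inequality.  The side conditions (Q in the class,
   the factorisations strict) are checked in each of the three cases: in case
   (iii) for posets Q is replaced by its reflexive-transitive closure, and
   for loopless posets every homomorphism is strict, so no contraction is
   needed.  Finally a Gamma-scheme is injective on Hom(G,R), which gives the
   homomorphism count. *)

Section Components.
Variable G : digraph.
Implicit Types (X Y : {set dV G}) (u v w x y : dV G).

Definition adj_in X : rel (dV G) := fun x y => [&& x \in X, y \in X & adjacent x y].

Lemma adjacent_sym : symmetric (@adjacent G).
Proof. by move=> x y; rewrite /adjacent orbC. Qed.

Lemma adj_in_sym X : symmetric (adj_in X).
Proof. by move=> x y; rewrite /adj_in adjacent_sym andbCA. Qed.

Lemma gamma_self X v : v \in X -> v \in gamma X v.
Proof. by move=> vX; rewrite inE vX connect0. Qed.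

Lemma gamma_mem X v w : w \in gamma X v -> w \in X.
Proof. by rewrite inE => /andP[]. Qed.

Lemma gamma_adj X v w : v \in X -> w \in X -> adjacent v w -> w \in gamma X v.
Proof. by move=> vX wX a; rewrite inE wX connect1 // /adj_in vX wX. Qed.

Lemma gamma_eq X v w : w \in gamma X v -> gamma X w = gamma X v.
Proof.
rewrite inE => /andP[_ cvw]; apply/setP => u; rewrite !inE.
have cwv : connect (adj_in X) w v by rewrite (sym_connect_sym (@adj_in_sym X)).
by apply: andb_id2l => _; apply/idP/idP; apply: connect_trans.
Qed.

Lemma gamma_gamma X v : gamma X v \subset gamma (gamma X v) v.
Proof.
apply/subsetP => w wg; rewrite inE wg /=.
move: wg; rewrite inE => /andP[_ /connectP[p pth ->]].
elim/last_ind: p pth => [|p x IH]; first by rewrite connect0.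
rewrite rcons_path last_rcons => /andP[pth a].
apply: connect_trans (IH pth) (connect1 _); move: a => /and3P[xX yX a].
have cx : connect (adj_in X) v (last v p) by apply/connectP; exists p.
by rewrite /adj_in a !inE xX yX cx (connect_trans cx (connect1 _)) // /adj_in xX yX a.
Qed.

Lemma gamma_mono X Y v : X \subset Y -> gamma X v \subset gamma Y v.
Proof.
move=> sXY; apply/subsetP => w; rewrite !inE => /andP[wX c].
rewrite (subsetP sXY _ wX); apply: connect_sub c => x y /and3P[xX yX a].
by apply: connect1; rewrite /adj_in (subsetP sXY _ xX) (subsetP sXY _ yX).
Qed.

End Components.

Lemma connect_inv (T : finType) (e : rel T) (P : T -> Prop) v w :
  (forall x y, e x y -> P x -> P y) -> P v -> connect e v w -> P w.
Proof.
move=> He Pv /connectP[s pth ->]; elim: s v pth Pv => //= y s IH v /andP[exy pth] Pv.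
exact: IH pth (He _ _ exy Pv).
Qed.

Section MapComponents.
Variables (G : digraph) (T : finType) (xi : {ffun dV G -> T}).
Implicit Types (v w x y : dV G).

Lemma Gam_self v : v \in Gam xi v.
Proof. by apply: gamma_self; rewrite inE. Qed.

Lemma Gam_val v w : w \in Gam xi v -> xi w = xi v.
Proof. by move/gamma_mem; rewrite inE => /eqP. Qed.

Lemma Gam_eq v w : w \in Gam xi v -> Gam xi w = Gam xi v.
Proof. by move=> h; rewrite /Gam (Gam_val h); apply: gamma_eq. Qed.

Lemma Gam_adj v w : adjacent v w -> xi v = xi w -> w \in Gam xi v.
Proof. by move=> a E; apply: gamma_adj; rewrite ?inE ?E. Qed.

End MapComponents.

Lemma Gam_charac (G : digraph) (T1 T2 : finType)
    (x1 : {ffun dV G -> T1}) (x2 : {ffun dV G -> T2}) :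
  (forall v w, w \in Gam x1 v -> x2 w = x2 v) ->
  (forall x y, adjacent x y -> x2 x = x2 y -> Gam x1 x = Gam x1 y) ->
  forall v, Gam x2 v = Gam x1 v.
Proof.
move=> const merge v; apply/eqP; rewrite eqEsubset; apply/andP; split.
  apply/subsetP => w; rewrite inE => /andP[_ c].
  suff <- : Gam x1 w = Gam x1 v by apply: Gam_self.
  apply: (connect_inv (P := fun x => Gam x1 x = Gam x1 v)) c => // x y /and3P[xX yX a] <-.
  symmetry; apply: merge a _.
  by move: xX yX; rewrite !inE => /eqP -> /eqP ->.
apply: subset_trans (gamma_gamma _ _) _; apply: gamma_mono.
by apply/subsetP => u /const E; rewrite inE E.
Qed.

Definition ctype (G : digraph) (T : finType) (xi : {ffun dV G -> T})
  : {ffun dV G -> {set dV G}} := [ffun v => Gam xi v].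

Lemma ctypeE (G : digraph) (T1 T2 : finType)
    (x1 : {ffun dV G -> T1}) (x2 : {ffun dV G -> T2}) :
  ctype x1 = ctype x2 -> forall v, Gam x1 v = Gam x2 v.
Proof. by move=> E v; move/ffunP: E => /(_ v); rewrite !ffunE. Qed.

Section Homomorphisms.
Variables (G H : digraph) (f : {ffun dV G -> dV H}).

Lemma hom_arc v w : is_hom f -> dA G v w -> dA H (f v) (f w).
Proof. by move=> /forallP /(_ v) /forallP /(_ w) /implyP. Qed.

Lemma strict_hom : is_strict f -> is_hom f.
Proof. by case/andP. Qed.

Lemma strict_ne v w : is_strict f -> dA G v w -> v != w -> f v != f w.
Proof. by case/andP => _ /forallP /(_ v) /forallP /(_ w) /implyP h a ne; apply: h; rewrite a ne. Qed.

Lemma strictP : is_hom f -> (forall v w, dA G v w -> v != w -> f v != f w) -> is_strict f.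
Proof.
move=> hf sep; rewrite /is_strict hf; apply/forallP => v; apply/forallP => w.
by apply/implyP => /andP[a ne]; apply: sep.
Qed.

Lemma strict_adj_ne v w : is_strict f -> adjacent v w -> v != w -> f v != f w.
Proof.
move=> sf /orP[a|a] ne; first exact: strict_ne.
by rewrite eq_sym; apply: strict_ne; rewrite // eq_sym.
Qed.

Lemma Gam_strict v : is_strict f -> Gam f v = [set v].
Proof.
move=> sf; apply/setP => w; rewrite inE; apply/idP/eqP => [|->]; last exact: Gam_self.
rewrite inE => /andP[_]; apply: (connect_inv (P := eq^~ v)) => // x y /and3P[xX yX a] Ex; subst x.
apply/eqP; apply: contraTT a; rewrite eq_sym => ne; apply/negP => a.
by move: xX yX (strict_adj_ne sf a (ne : v != y)) => /[!inE] _ /eqP ->; rewrite eqxx.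
Qed.

Lemma loopless_strict : (forall r, ~~ dA H r r) -> is_hom f -> is_strict f.
Proof.
move=> nl hf; apply: strictP => // v w a _; apply: contraNneq (nl (f v)) => E.
by rewrite {2}E hom_arc.
Qed.

End Homomorphisms.

Lemma strict_of_same_Gam (G R R' : digraph)
    (xi : {ffun dV G -> dV R}) (xi' : {ffun dV G -> dV R'}) :
  is_hom xi' -> (forall v, Gam xi' v = Gam xi v) -> is_strict xi -> is_strict xi'.
Proof.
move=> hx E sx; apply: strictP => // v w a ne; apply/eqP => E'.
have : w \in Gam xi v by rewrite -E; apply: Gam_adj; rewrite // /adjacent a.
by rewrite Gam_strict // inE eq_sym (negbTE ne).
Qed.

Lemma card_Hom_pred (G H : digraph) (P : pred {ffun dV G -> dV H}) :
  #|[set a : Hom G H | P (val a)]| = #|[set xi | is_hom xi && P xi]|.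
Proof.
rewrite -(card_imset _ val_inj); apply: eq_card => xi; rewrite [in RHS]inE.
apply/imsetP/andP => [[a]|[h e]]; first by rewrite inE => e ->; rewrite (valP a).
by exists (exist _ xi h); rewrite ?inE.
Qed.

Lemma card_Hom (G H : digraph) : #|{: Hom G H}| = #|homset G H|.
Proof.
rewrite -cardsT -(eq_card (A := [set a : Hom G H | predT (val a)])) => [|a]; last by rewrite !inE.
by rewrite card_Hom_pred; apply: eq_card => xi; rewrite !inE andbT.
Qed.

Lemma card_strict (G H : digraph) :
  #|strictset G H| = #|[set a : Hom G H | is_strict (val a)]|.
Proof.
rewrite card_Hom_pred; apply: eq_card => xi; rewrite !inE.
by apply/idP/andP => [sx|[]//]; rewrite (strict_hom sx).
Qed.

Lemma fiberwise_injection (A B K : finType) (tA : A -> K) (tB : B -> K) :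
  (forall k, #|[set a | tA a == k]| <= #|[set b | tB b == k]|) ->
  exists f : A -> B, injective f /\ forall a, tB (f a) = tA a.
Proof.
move=> le_fib; pose fibA a := enum [set a' | tA a' == tA a].
pose fibB a := enum [set b | tB b == tA a].
have lt_idx a : index a (fibA a) < size (fibB a).
  by rewrite -cardE; apply: leq_trans (le_fib (tA a)); rewrite cardE index_mem mem_enum inE.
have exB a : exists b, tB b == tA a.
  have /card_gt0P[b] : 0 < #|[set b | tB b == tA a]|.
    by rewrite cardE (leq_ltn_trans _ (lt_idx a)).
  by rewrite inE; exists b.
pose f a := nth (xchoose (exB a)) (fibB a) (index a (fibA a)).
have f_lab a : tB (f a) = tA a.
  by apply/eqP; have := mem_nth (xchoose (exB a)) (lt_idx a); rewrite mem_enum inE.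
exists f; split => // a a' Ef.
have Et : tA a = tA a' by rewrite -f_lab Ef f_lab.
move: Ef; rewrite /f (set_nth_default (xchoose (exB a')) _ (lt_idx a)) /fibA /fibB Et.
have la := lt_idx a; have la' := lt_idx a'; rewrite /fibA /fibB Et in la.
move=> /eqP; rewrite nth_uniq ?enum_uniq // => /eqP Ei.
have ma : a \in enum [set a'' | tA a'' == tA a'] by rewrite mem_enum inE Et.
by rewrite -(nth_index a ma) Ei nth_index // mem_enum inE.
Qed.

Lemma Gamma_le_of_injections (C : digraph -> Prop) (R S : digraph) :
  (forall G, C G -> exists f : Hom G R -> Hom G S,
      injective f /\ forall xi v, Gam (val (f xi)) v = Gam (val xi) v) ->
  Gamma_le C R S.
Proof.
move=> inj; pose rho G hG := proj1_sig (constructive_indefinite_description _ (inj G hG)).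
by exists rho => G hG; exact: proj2_sig (constructive_indefinite_description _ (inj G hG)).
Qed.

Lemma strict_count_of_Gamma_le (C : digraph -> Prop) (R S : digraph) :
  Gamma_le C R S -> forall G, C G -> #|strictset G R| <= #|strictset G S|.
Proof.
case=> rho scheme G hG; have [inj sameGam] := scheme G hG.
rewrite card_strict -(@card_in_imset _ _ (fun a => val (rho G hG a))); last first.
  by move=> a b _ _ /val_inj /inj.
apply/subset_leq_card/subsetP => xi /imsetP[a]; rewrite !inE => sa ->.
exact: strict_of_same_Gam (valP (rho G hG a)) (sameGam a) sa.
Qed.

Lemma hom_count_of_Gamma_le (C : digraph -> Prop) (R S : digraph) :
  Gamma_le C R S -> forall G, C G -> #|homset G R| <= #|homset G S|.
Proof.
by case=> rho scheme G hG; rewrite -!card_Hom; apply: leq_card (proj1 (scheme G hG)).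
Qed.

Definition fiber (G H : digraph) (k : {ffun dV G -> {set dV G}}) :=
  [set xi : {ffun dV G -> dV H} | is_hom xi && (ctype xi == k)].

Lemma Gamma_le_of_fibers (C : digraph -> Prop) (R S : digraph) :
  (forall G, C G -> forall xi0 : {ffun dV G -> dV R}, is_hom xi0 ->
     #|fiber R (ctype xi0)| <= #|fiber S (ctype xi0)|) ->
  Gamma_le C R S.
Proof.
move=> le_fib; apply: Gamma_le_of_injections => G hG.
have [k|f [f_inj f_type]] := @fiberwise_injection (Hom G R) (Hom G S) _
  (fun a => ctype (val a)) (fun b => ctype (val b)).
  rewrite !(card_Hom_pred (fun xi => ctype xi == k)) -/(fiber R k) -/(fiber S k).
  have [-> | [xi0]] := set_0Vmem (fiber R k); first by rewrite cards0.
  by rewrite inE => /andP[h0 /eqP <-]; apply: le_fib.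
by exists f; split => // xi; apply: ctypeE.
Qed.

Section Contraction.
Variables (G R Q : digraph) (xi0 : {ffun dV G -> dV R}).
Variables (pi : dV G -> dV Q) (sg : dV Q -> dV G).
Hypothesis pi_sg : cancel sg pi.
Hypothesis pi_eq : forall v w, (pi v == pi w) = (Gam xi0 v == Gam xi0 w).

Definition descend (H : digraph) (xi : {ffun dV G -> dV H}) : {ffun dV Q -> dV H} :=
  [ffun q => xi (sg q)].

Definition lift (H : digraph) (f : {ffun dV Q -> dV H}) : {ffun dV G -> dV H} :=
  [ffun v => f (pi v)].

(* A map of the type of xi0 is constant on the fibers of pi, so it factors. *)
Lemma descend_pi (H : digraph) (xi : {ffun dV G -> dV H}) v :
  ctype xi = ctype xi0 -> descend xi (pi v) = xi v.
Proof.
move=> t; rewrite ffunE; apply: Gam_val; rewrite (ctypeE t).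
have /eqP <- : Gam xi0 (sg (pi v)) == Gam xi0 v by rewrite -pi_eq pi_sg.
exact: Gam_self.
Qed.

Lemma type_separates (H : digraph) (xi : {ffun dV G -> dV H}) v w :
  ctype xi = ctype xi0 -> adjacent v w -> pi v != pi w -> xi v != xi w.
Proof.
move=> t a; apply: contra => /eqP E.
have wv : w \in Gam xi0 v by rewrite -(ctypeE t); apply: Gam_adj.
by rewrite pi_eq (Gam_eq wv).
Qed.

Lemma fiber_le_strict :
  (forall xi, xi \in fiber R (ctype xi0) -> is_strict (descend xi)) ->
  #|fiber R (ctype xi0)| <= #|strictset Q R|.
Proof.
move=> desc_strict; rewrite -(@card_in_imset _ _ (@descend R)).
  by apply/subset_leq_card/subsetP => f /imsetP[xi xiF ->]; rewrite inE desc_strict.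
move=> xi xi'; rewrite !inE => /andP[_ /eqP t] /andP[_ /eqP t'] /ffunP E.
by apply/ffunP => v; rewrite -(descend_pi _ t) -(descend_pi _ t') E.
Qed.

Hypothesis pi_hom : forall v w, dA G v w -> dA Q (pi v) (pi w).

Lemma lift_in_fiber (H : digraph) (f : {ffun dV Q -> dV H}) :
  is_strict f -> lift f \in fiber H (ctype xi0).
Proof.
move=> sf; rewrite inE; apply/andP; split.
  apply/forallP => v; apply/forallP => w; apply/implyP => a.
  by rewrite !ffunE; apply: hom_arc (strict_hom sf) (pi_hom a).
apply/eqP/ffunP => v; rewrite !ffunE; apply: Gam_charac => [u w /Gam_eq E|x y a].
  by rewrite !ffunE; congr (f _); apply/eqP; rewrite pi_eq E.
rewrite !ffunE => /eqP E; apply/eqP; rewrite -pi_eq; apply: contraLR E => ne.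
by apply: strict_adj_ne sf _ ne; case/orP: a => a; rewrite /adjacent (pi_hom a) ?orbT.
Qed.

Lemma strict_le_fiber (H : digraph) : #|strictset Q H| <= #|fiber H (ctype xi0)|.
Proof.
have lift_inj : injective (@lift H).
  by move=> f f' /ffunP E; apply/ffunP => q; have := E (sg q); rewrite !ffunE pi_sg.
rewrite -(card_imset _ lift_inj); apply/subset_leq_card/subsetP => g /imsetP[f].
by rewrite inE => sf ->; apply: lift_in_fiber.
Qed.

Lemma fiber_le_of_contraction (S : digraph) :
  (forall xi, xi \in fiber R (ctype xi0) -> is_strict (descend xi)) ->
  #|strictset Q R| <= #|strictset Q S| ->
  #|fiber R (ctype xi0)| <= #|fiber S (ctype xi0)|.
Proof.
move=> desc_strict le_QRS.
exact: leq_trans (fiber_le_strict desc_strict) (leq_trans le_QRS (strict_le_fiber S)).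
Qed.

End Contraction.

Section Quotient.
Variables (G : digraph) (K : finType) (k : dV G -> K).

Definition qvert : finType := {x : K | x \in codom k}.

Definition qpi (v : dV G) : qvert := exist _ (k v) (codom_f k v).

Definition qsg (q : qvert) : dV G := iinv (valP q).

Lemma qpi_sg : cancel qsg qpi.
Proof. by move=> q; apply: val_inj; rewrite /= f_iinv. Qed.

Lemma qpi_eq v w : (qpi v == qpi w) = (k v == k w).
Proof. by []. Qed.

Lemma qvert_nonempty : 0 < #|qvert|.
Proof. by case/card_gt0P: (dV_nonempty G) => v _; apply/card_gt0P; exists (qpi v). Qed.

Definition qarc : rel qvert :=
  fun q q' => [exists v, exists w, [&& qpi v == q, qpi w == q' & dA G v w]].

Lemma qarc_pi v w : dA G v w -> qarc (qpi v) (qpi w).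
Proof. by move=> a; apply/existsP; exists v; apply/existsP; exists w; rewrite !eqxx a. Qed.

Lemma qarcP q q' : qarc q q' -> exists v w, [/\ qpi v = q, qpi w = q' & dA G v w].
Proof. by case/existsP => v /existsP[w /and3P[/eqP <- /eqP <- a]]; exists v, w. Qed.

Definition quot : digraph := Digraph qarc qvert_nonempty.
Definition quot_closure : digraph := Digraph (connect qarc) qvert_nonempty.

End Quotient.

Lemma strict_into_poset (Q R : digraph) (f : {ffun dV Q -> dV R}) q q' :
  is_poset R -> is_strict f -> connect (dA Q) q q' ->
  dA R (f q) (f q') /\ (f q' = f q -> q' = q).
Proof.
move=> [Rrefl [Rantisym Rtrans]] sf.
have mono x y : connect (dA Q) x y -> dA R (f x) (f y).
  apply: (connect_inv (P := fun z => dA R (f x) (f z))) => // z z' a.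
  by move/Rtrans; apply; apply: hom_arc (strict_hom sf) a.
move=> c; split; first exact: mono.
case/connectP: c => s pth ->; elim: s q pth => //= q1 s IH q /andP[a pth] Ef.
have c1 : connect (dA Q) q1 (last q1 s) by apply/connectP; exists s.
have E1 : f q1 = f q.
  by apply: Rantisym; rewrite -{1}Ef mono // (hom_arc (strict_hom sf) a).
have <- : q1 = q.
  by apply/eqP; apply: contraLR (introT eqP E1) => ne; rewrite eq_sym (strict_ne sf a) // eq_sym.
by apply: IH; rewrite // E1.
Qed.

Lemma Ta_of_strict (Q R : digraph) (f : {ffun dV Q -> dV R}) :
  is_strict f -> in_Ta R -> in_Ta Q.
Proof.
move=> sf TaR v0 s; apply: contraNN (TaR (f v0) (map f s)) => /andP[/andP[ne pth] /eqP l].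
rewrite /closed_walk last_map l eqxx andbT -size_eq0 size_map size_eq0 ne /=.
rewrite path_map; apply: sub_path pth => x y /= /andP[nxy a].
by rewrite (strict_ne sf a nxy) (hom_arc (strict_hom sf) a).
Qed.

Lemma poset_star_loopless (R : digraph) : is_poset_star R -> forall r, ~~ dA R r r.
Proof. by case=> P _ [f [_ E]] r; rewrite E /= eqxx. Qed.

Section ContractComponents.
Variables (G R : digraph) (xi0 : {ffun dV G -> dV R}).
Hypothesis hom0 : is_hom xi0.

Local Notation k := (fun v => Gam xi0 v).
Local Notation pi := (qpi k).
Local Notation sg := (@qsg _ _ k).

Let pi_sg : cancel sg pi := @qpi_sg _ _ k.
Let pi_eq v w : (pi v == pi w) = (Gam xi0 v == Gam xi0 w) := qpi_eq k v w.

Let xi0_fiber : xi0 \in fiber R (ctype xi0).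
Proof. by rewrite inE hom0 eqxx. Qed.

Lemma quot_descend_strict (xi : {ffun dV G -> dV R}) :
  xi \in fiber R (ctype xi0) -> is_strict (@descend G (quot k) sg R xi).
Proof.
rewrite inE => /andP[hx /eqP t]; have desc := descend_pi (Q := quot k) pi_sg pi_eq _ t.
apply: strictP => [|q q' /qarcP[v [w [<- <- a]]] ne].
  apply/forallP => q; apply/forallP => q'; apply/implyP => /qarcP[v [w [<- <- a]]].
  by rewrite !desc; apply: hom_arc hx a.
by rewrite !desc; apply: (type_separates (Q := quot k) pi_eq t _ ne); rewrite /adjacent a.
Qed.

(* Case (ii): the quotient maps strictly into R, so it stays in T_a. *)
Lemma quot_in_Ta : in_Ta R -> in_Ta (quot k).
Proof. exact: Ta_of_strict (quot_descend_strict xi0_fiber). Qed.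

Lemma fiber_le_quot (S : digraph) :
  #|strictset (quot k) R| <= #|strictset (quot k) S| ->
  #|fiber R (ctype xi0)| <= #|fiber S (ctype xi0)|.
Proof.
apply: (fiber_le_of_contraction (Q := quot k) pi_sg pi_eq (@qarc_pi _ _ k)).
exact: quot_descend_strict.
Qed.

Hypothesis posetR : is_poset R.

Lemma closure_descend_strict (xi : {ffun dV G -> dV R}) :
  xi \in fiber R (ctype xi0) -> is_strict (@descend G (quot_closure k) sg R xi).
Proof.
move=> xiF; have walk q q' := @strict_into_poset (quot k) R _ q q' posetR (quot_descend_strict xiF).
apply: strictP => [|q q' c ne].
  by apply/forallP => q; apply/forallP => q'; apply/implyP => /walk[].
by apply: contra ne => /eqP E; case/walk: c => _ /(_ (esym E)) ->.
Qed.

Lemma closure_poset : is_poset (quot_closure k).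
Proof.
have walk q q' := @strict_into_poset (quot k) R _ q q' posetR (quot_descend_strict xi0_fiber).
split; first exact: connect0.
split; last by move=> y x z; apply: connect_trans.
move=> q q' /andP[c c']; have [le1 eq1] := walk _ _ c; have [le2 _] := walk _ _ c'.
by symmetry; apply: eq1; apply: (proj1 (proj2 posetR)); rewrite le1 le2.
Qed.

Lemma fiber_le_closure (S : digraph) :
  #|strictset (quot_closure k) R| <= #|strictset (quot_closure k) S| ->
  #|fiber R (ctype xi0)| <= #|fiber S (ctype xi0)|.
Proof.
apply: (fiber_le_of_contraction (Q := quot_closure k) pi_sg pi_eq _).
  by move=> v w a; apply/connect1/qarc_pi.
exact: closure_descend_strict.
Qed.

End ContractComponents.

(* Case (iii) for P^*: components of maps into a loopless digraph are
   singletons, so G itself (with pi the identity) serves as the contraction. *)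
Lemma fiber_le_loopless (G R S : digraph) (xi0 : {ffun dV G -> dV R}) :
  (forall r, ~~ dA R r r) -> is_hom xi0 ->
  #|strictset G R| <= #|strictset G S| ->
  #|fiber R (ctype xi0)| <= #|fiber S (ctype xi0)|.
Proof.
move=> loopless hom0; have strict0 := loopless_strict loopless hom0.
have id_eq v w : (v == w) = (Gam xi0 v == Gam xi0 w).
  by rewrite !Gam_strict // (inj_eq set1_inj).
apply: (@fiber_le_of_contraction G R G xi0 id id (fun _ => erefl) id_eq (fun _ _ a => a)).
move=> xi; rewrite inE => /andP[hx _]; apply: loopless_strict => //.
by apply/forallP => v; apply/forallP => w; apply/implyP => a; rewrite !ffunE; apply: hom_arc hx a.
Qed.

Theorem theorem2 (C : digraph -> Prop) (R : digraph)
  (hC : iso_closed C)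
  (hcase : (forall G, C G)
           \/ (in_Ta R /\ (forall G, in_Ta G -> C G))
           \/ (((forall G, C G <-> is_poset G) \/ (forall G, C G <-> is_poset_star G))
               /\ C R)) :
  forall S : digraph,
    (Gamma_le C R S <->
       (forall G, C G -> #|strictset G R| <= #|strictset G S|))
    /\ ((forall G, C G -> #|strictset G R| <= #|strictset G S|) ->
        forall G, C G -> #|homset G R| <= #|homset G S|).
Proof.
move=> S.
have b_to_a : (forall G, C G -> #|strictset G R| <= #|strictset G S|) -> Gamma_le C R S.
  move=> le_strict; apply: Gamma_le_of_fibers => G hG xi0 hom0.
  case: hcase => [all | [[TaR TaC] | [[posetC | starC] CR]]].
  - exact/fiber_le_quot/le_strict/all.
  - exact/fiber_le_quot/le_strict/TaC/(quot_in_Ta hom0).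
  - have posetR : is_poset R by apply/posetC.
    exact/(fiber_le_closure posetR)/le_strict/posetC/(closure_poset hom0 posetR).
  - exact: fiber_le_loopless (poset_star_loopless (proj1 (starC R) CR)) hom0 (le_strict G hG).
split; first by split; [apply: strict_count_of_Gamma_le | apply: b_to_a].
by move/b_to_a; apply: hom_count_of_Gamma_le.
Qed.
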